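(* Let $f_0$ be an arithmetic function, let $m\ge1$ and $n\ge1$. Then $C_m(n)=C_1(n)\,L_n^{m-1}$; explicitly, for $1\le k\le n$, \[c_m(n,k)=\sum_{i=k}^n(m-1)^{i-k}\binom{i-1}{k-1}c_1(n,i).\]
   Context: An arithmetic function is a function $f_0:\{1,2,\ldots\}\to\mathbb{C}$. For $m\ge 1$, $f_m$ is the invert transform of $f_{m-1}$, i.e. $f_m(n)=f_{m-1}(n)+\sum_{i=1}^{n-1}f_{m-1}(i)f_m(n-i)$ for $n\ge1$. For $m\ge1$ the numbers $c_m(n,k)$, $0\le k\le n$, are defined by $c_m(0,0)=1$, $c_m(n,0)=0$ for $n\ge1$, and $c_m(n,k)=\sum_{i=1}^{n-k+1}f_{m-1}(i)\,c_m(n-i,k-1)$ for $1\le k\le n$. $C_m(n)$ is the $n\times n$ lower triangular matrix whose $(r,k)$ entry is $c_m(r,k)$ for $1\le k\le r\le n$ (and $0$ for $k>r$), and $L_n$ is the $n\times n$ lower triangular Pascal matrix whose $(r,k)$ entry is $\binom{r-1}{k-1}$; $L_n^0$ is the identity. The convention $0^0=1$ is used. *)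

From HB Require Import structures.
From mathcomp Require Import all_boot all_order all_algebra.
Set Implicit Arguments. Unset Strict Implicit. Unset Printing Implicit Defensive.
Import GRing.Theory.
Local Open Scope ring_scope.

(* Arithmetic functions are represented as g : nat -> R; only the values at
   n >= 1 are meaningful (the value at 0 is never used by the definitions). *)

Fixpoint invert_aux (R : comNzRingType) (g : nat -> R) (N n : nat) : R :=
  match N with
  | 0 => 0
  | N'.+1 => g n + \sum_(1 <= i < n) g i * invert_aux g N' (n - i)
  end.

(* The invert transform of g (fuel n suffices for argument n). *)
Definition invert (R : comNzRingType) (g : nat -> R) (n : nat) : R :=
  invert_aux g n n.

Definition fiter (R : comNzRingType) (f0 : nat -> R) (m : nat) : nat -> R :=
  iter m (@invert R) f0.

(* c(n,k) attached to g = f_{m-1}: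
   c(0,0)=1, c(n,0)=0 (n>=1), c(n,k)=sum_{i=1}^{n-k+1} g(i) c(n-i,k-1) for 1<=k<=n.
   (Values with k > n are set to 0; they are never used.) *)
Fixpoint cnum (R : comNzRingType) (g : nat -> R) (n k : nat) : R :=
  match k with
  | 0 => if n == 0%N then 1 else 0
  | k'.+1 => if (k <= n)%N then
               \sum_(1 <= i < (n - k).+2) g i * cnum g (n - i) k'
             else 0
  end.

Definition c_m (R : comNzRingType) (f0 : nat -> R) (m n k : nat) : R :=
  cnum (fiter f0 (m - 1)) n k.

Definition Cmat (R : comNzRingType) (f0 : nat -> R) (m n : nat) : 'M[R]_n :=
  \matrix_(i < n, j < n) (if (j <= i)%N then c_m f0 m i.+1 j.+1 else 0).

Definition Lmat (R : comNzRingType) (n : nat) : 'M[R]_n :=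
  \matrix_(i < n, j < n) ('C(i, j))%:R.

(* Let G be the generating series of f_(m-1) without constant term, so that
   c_m(n,k) is the coefficient of X^n in G^k.  The invert transform H of
   f_(m-1) satisfies H = G + G H, i.e. H = G / (1 - G), hence
   H^(k+1) = G^(k+1) / (1 - G)^(k+1) = sum_i C(i,k) G^(i+1).  All of this is
   computed modulo X^N, where a fixpoint equation Y = A + G Y has at most one
   solution because G^N vanishes.  Reading off coefficients gives
   c_(m+1)(n,k+1) = sum_i C(i,k) c_m(n,i+1), i.e. C_(m+1) = C_m L; finally
   L^a has entries a^(i-j) C(i,j), by C(i,l) C(l,j) = C(i,j) C(i-j,l-j) and
   the binomial theorem. *)

From mathcomp Require Import all_boot all_order all_algebra.
From mathcomp Require Import zify ring.
Import GRing.Theory.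
Set Implicit Arguments. Unset Strict Implicit. Unset Printing Implicit Defensive.
Local Open Scope ring_scope.

Lemma bin_trinomial i j t :
  ('C(i, j + t) * 'C(j + t, j) = 'C(i, j) * 'C(i - j, t))%N.
Proof.
have [lt_i_jt | le_jt_i] := ltnP i (j + t).
  rewrite bin_small // mul0n; have [lt_ij | le_ji] := ltnP i j.
    by rewrite bin_small.
  by rewrite (@bin_small (i - j)) ?muln0 // ltn_subLR.
have le_ji : (j <= i)%N := leq_trans (leq_addr t j) le_jt_i.
have le_t_ij : (t <= i - j)%N by rewrite leq_subRL.
have facts_gt0 : (0 < j`! * t`! * (i - j - t)`!)%N by rewrite !muln_gt0 !fact_gt0.
apply/eqP; rewrite -(eqn_pmul2r facts_gt0); apply/eqP.
have fact_i_jt := bin_fact le_jt_i; rewrite subnDA in fact_i_jt.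
have fact_jt_j := bin_fact (leq_addr t j); rewrite addKn in fact_jt_j.
have fact_i_j := bin_fact le_ji; have fact_ij_t := bin_fact le_t_ij.
transitivity i`!; last by rewrite -fact_i_j -fact_ij_t; ring.
by rewrite -fact_i_jt -fact_jt_j; ring.
Qed.

Lemma big_ord_supp_nat (V : nmodType) (F : nat -> V) n a b : (b <= n)%N ->
    (forall l, (l < n)%N -> ~~ (a <= l < b)%N -> F l = 0) ->
  \sum_(l < n) F l = \sum_(a <= l < b) F l.
Proof.
move=> le_bn F0; rewrite big_geq_mkord (big_ord_widen_cond n _ _ le_bn).
rewrite [RHS]big_mkcond.
by apply: eq_bigr => l _; case: ifP => // /negbT /F0 ->.
Qed.

Section TakePoly.
Variable R : comNzRingType.

Lemma take_poly_mulr n (p q : {poly R}) :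
  take_poly n (p * take_poly n q) = take_poly n (p * q).
Proof.
rewrite -[in RHS](poly_take_drop n q) mulrDr mulrA take_polyD take_polyMXn_0.
by rewrite addr0.
Qed.

Lemma take_poly_mull n (p q : {poly R}) :
  take_poly n (take_poly n p * q) = take_poly n (p * q).
Proof. by rewrite mulrC take_poly_mulr mulrC. Qed.

End TakePoly.

Section TruncatedGeometricSeries.
Variables (R : comNzRingType) (N M : nat) (Q : {poly R}).
Hypothesis le_N_M1 : (N <= M.+1)%N.
Let G := Q * 'X.

Lemma take_poly_expG_mul j p : (N <= j)%N -> take_poly N (G ^+ j * p) = 0.
Proof.
move=> /eqP N_sub_j; rewrite exprMn mulrAC take_polyMXn N_sub_j.
by rewrite take_poly0l mul0r.
Qed.

Lemma take_poly_fixpoint_uniq A X Y :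
    take_poly N X = take_poly N (A + G * X) ->
    take_poly N Y = take_poly N (A + G * Y) ->
  take_poly N X = take_poly N Y.
Proof.
move=> fixX fixY; apply/eqP; rewrite -subr_eq0 -linearB /=; apply/eqP.
have fixD : take_poly N (X - Y) = take_poly N (G * (X - Y)).
  by rewrite !linearB /= fixX fixY -linearB /= opprD addrACA subrr add0r mulrBr.
have fixDexp t : take_poly N (X - Y) = take_poly N (G ^+ t * (X - Y)).
  elim: t => [|t IHt]; first by rewrite mul1r.
  by rewrite fixD -take_poly_mulr IHt take_poly_mulr exprS mulrA.
by rewrite (fixDexp N) take_poly_expG_mul.
Qed.

Definition geom_exp k := \sum_(i < M) G ^+ i.+1 *+ 'C(i, k).

Lemma take_poly_geom_exp0 :
  take_poly N (geom_exp 0) = take_poly N (G + G * geom_exp 0).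
Proof.
have geom_exp0E : geom_exp 0 = \sum_(i < M) G ^+ i.+1.
  by apply: eq_bigr => i _; rewrite bin0.
have -> : G + G * geom_exp 0 = geom_exp 0 + G ^+ M.+1 * 1.
  transitivity (\sum_(i < M.+1) G ^+ i.+1).
    by rewrite big_ord_recl geom_exp0E mulr_sumr; congr (_ + _).
  by rewrite big_ord_recr geom_exp0E mulr1.
by rewrite take_polyD take_poly_expG_mul // addr0.
Qed.

Lemma take_poly_geom_expS k :
  take_poly N (geom_exp k.+1) = take_poly N (G * geom_exp k + G * geom_exp k.+1).
Proof.
have -> : G * geom_exp k + G * geom_exp k.+1
          = geom_exp k.+1 + G ^+ M.+1 * 'C(M, k.+1)%:R.
  transitivity (\sum_(i < M.+1) G ^+ i.+1 *+ 'C(i, k.+1)).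
    rewrite big_ord_recl bin0n mulr0n add0r -mulrDr -big_split mulr_sumr.
    apply: eq_bigr => i _.
    by rewrite lift0 /= -mulrnDr addnC -binS mulrnAr -exprS.
  by rewrite big_ord_recr mulr_natr.
by rewrite take_polyD take_poly_expG_mul // addr0.
Qed.

Lemma take_poly_exp_geom H k :
    take_poly N H = take_poly N (G + G * H) ->
  take_poly N (H ^+ k.+1) = take_poly N (geom_exp k).
Proof.
move=> fixH; elim: k => [|k IHk].
  exact: take_poly_fixpoint_uniq take_poly_geom_exp0.
rewrite exprS -take_poly_mulr IHk take_poly_mulr.
apply: take_poly_fixpoint_uniq (take_poly_geom_expS k).
by rewrite -take_poly_mull fixH take_poly_mull mulrDl -mulrA.
Qed.

End TruncatedGeometricSeries.

Section CompositionSums.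
Variables (R : comNzRingType) (g : nat -> R).

Lemma cnum_small n k : (n < k)%N -> cnum g n k = 0.
Proof. by case: k => // k /= lt_nk; rewrite leqNgt lt_nk. Qed.

Lemma cnumS n k : cnum g n k.+1 = \sum_(i < n) g i.+1 * cnum g (n - i.+1) k.
Proof.
rewrite /=; case: leqP => [le_nk | lt_kn].
  by rewrite big1 // => i _; rewrite cnum_small ?mulr0 //; have := ltn_ord i; lia.
rewrite big_add1 /=; symmetry.
apply: big_ord_supp_nat => [|l lt_ln lb]; first lia.
by rewrite cnum_small ?mulr0 //; lia.
Qed.

Lemma invert_aux_fuel N N' n : (0 < n <= N)%N -> (n <= N')%N ->
  invert_aux g N n = invert_aux g N' n.
Proof.
elim: N N' n => [|N IHN] [|N'] n; try lia.
move=> le_nN le_nN'; congr (_ + _); apply: eq_big_nat => i lt_i.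
by congr (_ * _); apply: IHN; lia.
Qed.

Lemma invertE n : (0 < n)%N ->
  invert g n = g n + \sum_(1 <= i < n) g i * invert g (n - i).
Proof.
case: n => // n _; rewrite /invert /=; congr (_ + _); apply: eq_big_nat => i lt_i.
by congr (_ * _); apply: invert_aux_fuel; lia.
Qed.

Definition genpoly N : {poly R} := \poly_(i < N) g i.+1 * 'X.

Lemma coef_genpoly0 N : (genpoly N)`_0 = 0.
Proof. by rewrite coefMX. Qed.

Lemma coef_genpolyS N i : (i < N)%N -> (genpoly N)`_i.+1 = g i.+1.
Proof. by rewrite coefMX coef_poly => ->. Qed.

Lemma coef_genpoly_exp N k n : (n <= N)%N -> (genpoly N ^+ k)`_n = cnum g n k.
Proof.
elim: k n => [|k IHk] n le_nN; first by rewrite coef1; case: n {le_nN}.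
rewrite exprS coefM big_ord_recl coef_genpoly0 mul0r add0r cnumS.
apply: eq_bigr => i _; rewrite lift0 coef_genpolyS ?(leq_trans (ltn_ord i)) //.
by rewrite IHk // (leq_trans (leq_subr _ _) le_nN).
Qed.

End CompositionSums.

Lemma take_genpoly_invert (R : comNzRingType) (g : nat -> R) N :
  take_poly N (genpoly (invert g) N)
  = take_poly N (genpoly g N + genpoly g N * genpoly (invert g) N).
Proof.
apply/polyP => n; rewrite !coef_take_poly; case: ltnP => // lt_nN.
rewrite coefD coefM big_ord_recl coef_genpoly0 mul0r add0r.
case: n lt_nN => [|n] lt_nN; first by rewrite big_ord0 !coef_genpoly0 addr0.
have lt_n1N := ltnW lt_nN.
rewrite big_ord_recr /= subnn coef_genpoly0 mulr0 addr0 !(coef_genpolyS _ lt_n1N).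
rewrite (invertE _ (ltn0Sn n)) big_add1 /= big_mkord; congr (_ + _).
apply: eq_bigr => i _; have lt_iN := leq_trans (ltn_ord i) (ltnW lt_n1N).
have lt_niN : (n - i.+1 < N)%N := leq_ltn_trans (leq_subr _ _) lt_n1N.
by rewrite /bump leq0n add1n subSS -(subnSK (ltn_ord i)) !coef_genpolyS.
Qed.

Lemma cnum_invert (R : comNzRingType) (g : nat -> R) n M k : (n <= M)%N ->
  cnum (invert g) n k.+1 = \sum_(i < M) cnum g n i.+1 *+ 'C(i, k).
Proof.
move=> le_nM; rewrite -(coef_genpoly_exp _ _ (leqnSn n)).
have := congr1 (fun p : {poly R} => p`_n)
  (@take_poly_exp_geom _ n.+1 M _ le_nM _ k (take_genpoly_invert g n.+1)).
rewrite !coef_take_poly ltnSn => ->.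
rewrite coef_sum; apply: eq_bigr => i _.
by rewrite coefMn coef_genpoly_exp.
Qed.

Section PascalMatrix.
Variable R : comNzRingType.

Definition cnum_mx (g : nat -> R) n : 'M[R]_n :=
  \matrix_(i < n, j < n) cnum g i.+1 j.+1.

Lemma Cmat_cnum_mx f0 m n : Cmat f0 m n = cnum_mx (fiter f0 (m - 1)) n.
Proof.
apply/matrixP => i j; rewrite !mxE; case: leqP => // lt_ij.
by rewrite cnum_small.
Qed.

Lemma cnum_mx_invert g n : cnum_mx (invert g) n = cnum_mx g n *m Lmat R n.
Proof.
apply/matrixP => i j; rewrite !mxE (cnum_invert _ _ (ltn_ord i)).
by apply: eq_bigr => l _; rewrite !mxE mulr_natr.
Qed.

Lemma Lmat_exp n a (i j : 'I_n) :
  (Lmat R n ^+ a) i j = a%:R ^+ (i - j) *+ 'C(i, j).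
Proof.
elim: a i j => [|a IHa] i j.
  rewrite expr0 mxE -val_eqE expr0n subn_eq0 /=.
  case: (ltngtP i j) => [lt_ij|lt_ji|->]; last by rewrite binn.
    by rewrite bin_small.
  by rewrite mul0rn.
rewrite exprSr -mulmxE mxE; under eq_bigr do rewrite IHa mxE.
transitivity (\sum_(j <= l < i.+1) a%:R ^+ (i - l) *+ 'C(i, l) * 'C(l, j)%:R
              :> R).
  apply: big_ord_supp_nat => // l _; rewrite negb_and -ltnNge -leqNgt.
  case/orP => [lt_lj|lt_il]; first by rewrite (bin_small lt_lj) mulr0.
  by rewrite (bin_small lt_il) mulr0n mul0r.
have [le_ji|lt_ij] := leqP j i; last by rewrite big_geq // bin_small.
rewrite -{1}(add0n j) big_addn big_mkord subSn // mulrSr exprDn -sumrMnl.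
apply: eq_bigr => t _; rewrite expr1n mulr1 mulr_natr -!mulrnA.
by rewrite addnC subnDA bin_trinomial mulnC.
Qed.

Lemma Cmat_pascal f0 a n : Cmat f0 a.+1 n = Cmat f0 1 n *m Lmat R n ^+ a.
Proof.
rewrite !Cmat_cnum_mx subSS !subn0.
elim: a => [|a IHa]; first by rewrite expr0 mulmx1.
by rewrite [fiter _ _]/= cnum_mx_invert IHa !mulmxE exprSr mulrA.
Qed.

End PascalMatrix.

Theorem proposition9 (R : comNzRingType) (f0 : nat -> R) (m n : nat)
    (hm : (1 <= m)%N) (hn : (1 <= n)%N) :
  Cmat f0 m n = Cmat f0 1 n *m (Lmat R n) ^+ (m - 1)
  /\ (forall k : nat, (1 <= k <= n)%N ->
        c_m f0 m n k =
        \sum_(k <= i < n.+1)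
           ((m - 1)%:R ^+ (i - k) * ('C(i - 1, k - 1))%:R * c_m f0 1 n i)).
Proof.
case: m hm => // a _; rewrite subSS subn0; split; first exact: Cmat_pascal.
case: n hn => // n _ [|k] // /andP[_ lt_kn1].
have -> : c_m f0 a.+1 n.+1 k.+1 = Cmat f0 a.+1 n.+1 ord_max (Ordinal lt_kn1).
  by rewrite mxE -ltnS lt_kn1.
rewrite Cmat_pascal mxE; under eq_bigr do rewrite !mxE Lmat_exp leq_ord.
transitivity
  (\sum_(k <= l < n.+1) c_m f0 1 n.+1 l.+1 * (a%:R ^+ (l - k) *+ 'C(l, k))).
  apply: big_ord_supp_nat => // l lt_ln; rewrite lt_ln andbT -ltnNge => lt_lk.
  by rewrite bin_small // mulr0n mulr0.
rewrite big_add1 /=; apply: eq_big_nat => l _.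
by rewrite subSS !subn1 /= mulr_natr mulrC.
Qed.
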